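(* Let $n\in\mathbb{N}$, $\mathcal{R}\subset\mathcal{H}_n$ non-empty, $\mathbb{T}$ a generator set of $\mathcal{R}$, and $A\subset[n]$ non-empty. Set $\mathcal{G}_0=\mathcal{O}_A$ and fix $|\psi_0\rangle\in\mathcal{R}$. For $q=1,2,\dots$, as long as $\mathcal{G}(\mathbb{T})\setminus\bigcup_{i=0}^{q-1}\mathcal{G}_i\neq\emptyset$, choose $P_q$ in this set and put $\mathcal{G}_q=\{P_qP : P\in\mathcal{G}_0\}$; let $m$ be the largest $q$ for which this choice was made ($m=0$ if none). Put $\mathcal{R}_i=\{P|\psi_0\rangle : P\in\mathcal{G}_i\}$ for $i=0,\dots,m$. Then $\mathcal{R}/{\sim_A}=\{\mathcal{R}_0,\dots,\mathcal{R}_m\}$. Moreover, if all elements of $\mathbb{T}$ are self-inverse and $\mathbb{T}$ is pointwise-disjoint, then every equivalence class in $\mathcal{R}/{\sim_A}$ has cardinality $|\mathcal{O}_A|$.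
   Context: $[n]=\{1,\dots,n\}$; $\mathcal{H}_n$ is the computational basis of $n$ qubits. For $|\psi\rangle=|a_1\dots a_n\rangle$ and non-empty $A=\{i_1<\dots<i_m\}$, $|\psi_A\rangle=|a_{i_1}\dots a_{i_m}\rangle$. $|\psi\rangle\sim_A|\phi\rangle$ iff $|\psi_A\rangle=|\phi_A\rangle$ (for $|\psi\rangle,|\phi\rangle\in\mathcal{R}$); $\mathcal{R}/{\sim_A}$ is its set of classes. For a set $F$ of maps $\mathcal{R}\to\mathcal{R}$, $\mathcal{G}(F)$ is its closure under composition. $\mathbb{T}$ (a set of maps $\mathcal{R}\to\mathcal{R}$) is a generator set of $\mathcal{R}$ if: (i) all elements of $\mathcal{G}(\mathbb{T})$ commute pairwise; (ii) for all $|\psi\rangle,|\phi\rangle\in\mathcal{R}$ some $P\in\mathcal{G}(\mathbb{T})$ has $P|\psi\rangle=|\phi\rangle$; (iii) for every $P\in\mathbb{T}$ and non-empty $B\subset[n]$, if $(P|\psi\rangle)_B=|\psi_B\rangle$ for some $|\psi\rangle\in\mathcal{R}$ then $(P|\phi\rangle)_B=|\phi_B\rangle$ for all $|\phi\rangle\in\mathcal{R}$. $\mathbb{T}$ is pointwise-disjoint if for all $P,T\in\mathcal{G}(\mathbb{T})$, $P|\psi\rangle=T|\psi\rangle$ for some $|\psi\rangle\in\mathcal{R}$ implies $P=T$. $\mathcal{O}_A=\{P\in\mathcal{G}(\mathbb{T}) : (P|\psi\rangle)_A=|\psi_A\rangle\ \forall|\psi\rangle\in\mathcal{R}\}$. 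*)

From mathcomp Require Import all_boot.
Set Implicit Arguments. Unset Strict Implicit. Unset Printing Implicit Defensive.

(* Computational basis states of n qubits: |a_1 ... a_n>, encoded as the
   function i |-> a_(i+1) on the index type 'I_n = {0,...,n-1}
   (qubit positions are 0-based here instead of [n] = {1,...,n}). *)
Definition qstate (n : nat) := {ffun 'I_n -> bool}.

Notation elt R := {x : qstate _ | x \in R}.

Notation rmap R := {ffun elt R -> elt R}.

Definition mcomp n (R : {set qstate n}) (P T : rmap R) : rmap R :=
  [ffun x => P (T x)].

Definition mid n (R : {set qstate n}) : rmap R := [ffun x => x].

(* |psi_A> : the sub-string (a_{i_1} ... a_{i_m}) for A = {i_1 < ... < i_m}. *)
Definition restr n (A : {set 'I_n}) (psi : qstate n) : seq bool :=
  [seq psi i | i <- enum A].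

Definition simA n (R : {set qstate n}) (A : {set 'I_n}) (psi phi : elt R) : Prop :=
  restr A (val psi) = restr A (val phi).

Definition quotA n (R : {set qstate n}) (A : {set 'I_n}) : {set {set elt R}} :=
  [set [set y | restr A (val y) == restr A (val x)] | x : elt R].

Definition gclos n (R : {set qstate n}) (F : {set rmap R}) : {set rmap R} :=
  \bigcap_(S : {set rmap R} | (F \subset S) &&
      [forall P in S, forall T in S, mcomp P T \in S]) S.

Definition generator_set n (R : {set qstate n}) (TT : {set rmap R}) : Prop :=
  [/\ (forall P T, P \in gclos TT -> T \in gclos TT -> mcomp P T = mcomp T P),
      (forall psi phi : elt R, exists2 P, P \in gclos TT & P psi = phi) &
      (forall P (B : {set 'I_n}), P \in TT -> B != set0 ->
         forall psi : elt R, restr B (val (P psi)) = restr B (val psi) ->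
         forall phi : elt R, restr B (val (P phi)) = restr B (val phi))].

Definition pointwise_disjoint n (R : {set qstate n}) (TT : {set rmap R}) : Prop :=
  forall P T, P \in gclos TT -> T \in gclos TT ->
    forall psi : elt R, P psi = T psi -> P = T.

Definition OA n (R : {set qstate n}) (TT : {set rmap R}) (A : {set 'I_n})
  : {set rmap R} :=
  [set P in gclos TT | [forall psi : elt R, restr A (val (P psi)) == restr A (val psi)]].

(* G_i given the chosen maps Ps (Ps q = P_q for q >= 1; Ps 0 unused):
   G_0 = O_A, G_q = { P_q P : P in G_0 }. *)
Definition Gi n (R : {set qstate n}) (TT : {set rmap R}) (A : {set 'I_n})
  (Ps : nat -> rmap R) (i : nat) : {set rmap R} :=
  if i == 0 then OA TT A else [set mcomp (Ps i) P | P in OA TT A].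

Definition Ri n (R : {set qstate n}) (TT : {set rmap R}) (A : {set 'I_n})
  (Ps : nat -> rmap R) (psi0 : elt R) (i : nat) : {set elt R} :=
  [set P psi0 | P : rmap R in Gi TT A Ps i].

(* (Ps, m) is a valid run of the choice procedure: each P_q (1 <= q <= m) is
   chosen in G(T) \ (G_0 u ... u G_(q-1)), and the procedure stops after m,
   i.e. G(T) \ (G_0 u ... u G_m) is empty. *)
Definition valid_run n (R : {set qstate n}) (TT : {set rmap R}) (A : {set 'I_n})
  (Ps : nat -> rmap R) (m : nat) : Prop :=
  (forall q, 1 <= q <= m ->
     Ps q \in gclos TT :\: \bigcup_(i < q) Gi TT A Ps i) /\
  gclos TT :\: \bigcup_(i < m.+1) Gi TT A Ps i = set0.

From mathcomp Require Import all_boot.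

Set Implicit Arguments.
Unset Strict Implicit.
Unset Printing Implicit Defensive.

(* Each generator either fixes or flips a given qubit on every state of R
   (condition (iii) with B = {i}), a property stable under composition, so
   every map of G(T) that fixes the A-part of one state fixes it on all of
   them. Hence the ~_A-class of x is the orbit of x under O_A; by
   commutativity R_q is the orbit of P_q |psi_0>, and since the G_q cover
   G(T) and G(T) acts transitively, these orbits exhaust R / ~_A. When T is
   pointwise-disjoint, P |-> P x is injective on O_A, which gives the
   cardinality of each class. *)

Section Closure.
Variables (n : nat) (R : {set qstate n}) (TT : {set rmap R}).

Lemma gclos_min (S : {set rmap R}) : TT \subset S ->
  (forall P T, P \in S -> T \in S -> mcomp P T \in S) -> gclos TT \subset S.
Proof.
move=> sTS compS; apply: bigcap_inf; rewrite sTS /=.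
apply/forallP => P; apply/implyP => PS; apply/forallP => T; apply/implyP.
exact: compS.
Qed.

End Closure.

Section BitwiseUniform.
Variables (n : nat) (R : {set qstate n}).

Definition fixes_bit (P : rmap R) (i : 'I_n) (x : elt R) :=
  val (P x) i == val x i.

Definition bitwise_uniform (P : rmap R) :=
  [forall i, forall x, forall y, fixes_bit P i x == fixes_bit P i y].

Lemma bitwise_uniformP P :
  reflect (forall i x y, fixes_bit P i x = fixes_bit P i y) (bitwise_uniform P).
Proof.
apply: (iffP forallP) => [uP i x y | uP i].
  by have /forallP/(_ x)/forallP/(_ y)/eqP := uP i.
by apply/forallP => x; apply/forallP => y; apply/eqP.
Qed.

Lemma fixes_bit_comp P T i x :
  fixes_bit (mcomp P T) i x = (fixes_bit P i (T x) == fixes_bit T i x).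
Proof.
by rewrite /fixes_bit ffunE; case: (val (P (T x)) i); case: (val (T x) i);
  case: (val x i).
Qed.

Lemma bitwise_uniform_comp P T :
  bitwise_uniform P -> bitwise_uniform T -> bitwise_uniform (mcomp P T).
Proof.
move=> /bitwise_uniformP uP /bitwise_uniformP uT.
by apply/bitwise_uniformP => i x y; rewrite !fixes_bit_comp (uP i (T x) (T y)) (uT i x y).
Qed.

Lemma restr_singleton (i : 'I_n) (z : qstate n) : restr [set i] z = [:: z i].
Proof. by rewrite /restr enum_set1. Qed.

Lemma generator_bitwise_uniform (TT : {set rmap R}) P :
  generator_set TT -> P \in TT -> bitwise_uniform P.
Proof.
case=> _ _ localTT PT; apply/bitwise_uniformP => i.
have fixes_all x y : fixes_bit P i x -> fixes_bit P i y.
  move=> /eqP Px; apply/eqP.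
  have i_neq0 : [set i] != set0 by apply/set0Pn; exists i; rewrite inE.
  have := localTT P [set i] PT i_neq0 x.
  by rewrite !restr_singleton Px => /(_ erefl y); rewrite !restr_singleton; case.
by move=> x y; apply/idP/idP; apply: fixes_all.
Qed.

Lemma gclos_bitwise_uniform (TT : {set rmap R}) P :
  generator_set TT -> P \in gclos TT -> bitwise_uniform P.
Proof.
move=> genTT PG.
suff /subsetP/(_ P PG) : gclos TT \subset [set P | bitwise_uniform P].
  by rewrite inE.
apply: gclos_min => [|P' T]; last by rewrite !inE; apply: bitwise_uniform_comp.
by apply/subsetP => P' /(generator_bitwise_uniform genTT); rewrite inE.
Qed.

Lemma restr_bitwise_uniform (A : {set 'I_n}) P x y :
  bitwise_uniform P -> restr A (val (P x)) = restr A (val x) ->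
  restr A (val (P y)) = restr A (val y).
Proof.
move=> /bitwise_uniformP uP /eq_in_map Px; apply/eq_in_map => i iA.
by apply/eqP; rewrite -/(fixes_bit P i y) (uP i y x); apply/eqP; apply: Px.
Qed.

End BitwiseUniform.

Section Classes.
Variables (n : nat) (R : {set qstate n}) (TT : {set rmap R}) (A : {set 'I_n}).
Hypothesis genTT : generator_set TT.

Definition classA (x : elt R) : {set elt R} :=
  [set y | restr A (val y) == restr A (val x)].

Lemma classA_eq x y : y \in classA x -> classA y = classA x.
Proof. by rewrite inE => /eqP xy; apply/setP => z; rewrite !inE xy. Qed.

Lemma mem_quotA_classE C x : C \in quotA R A -> x \in C -> C = classA x.
Proof. by case/imsetP => z _ -> /classA_eq. Qed.

Lemma OA_restr P x : P \in OA TT A -> restr A (val (P x)) = restr A (val x).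
Proof. by rewrite inE => /andP[_ /forallP/(_ x)/eqP]. Qed.

Lemma OA_gclos P : P \in OA TT A -> P \in gclos TT.
Proof. by rewrite inE => /andP[]. Qed.

Lemma classA_orbit x : classA x = [set (P : rmap R) x | P in OA TT A].
Proof.
apply/setP => y; rewrite inE; apply/eqP/imsetP => [yx | [P /OA_restr Px ->]].
  have [_ transTT _] := genTT; have [P PG Px] := transTT x y.
  exists P => //; rewrite inE PG; apply/forallP => z; apply/eqP.
  apply: (restr_bitwise_uniform (x := x) z (gclos_bitwise_uniform genTT PG)).
  by rewrite Px.
exact: Px.
Qed.

Lemma gclos_orbit Q x : Q \in gclos TT ->
  [set mcomp Q P x | P in OA TT A] = classA (Q x).
Proof.
move=> QG; rewrite classA_orbit; apply: eq_in_imset => P /OA_gclos PG.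
have [commTT _ _] := genTT.
by rewrite (commTT Q P QG PG) ffunE.
Qed.

Lemma Ri0E Ps psi0 : Ri TT A Ps psi0 0 = classA psi0.
Proof. by rewrite /Ri /Gi eqxx classA_orbit. Qed.

Lemma RiE Ps psi0 i : i != 0 -> Ps i \in gclos TT ->
  Ri TT A Ps psi0 i = classA (Ps i psi0).
Proof.
by move=> /negbTE i_neq0 PsG; rewrite /Ri /Gi i_neq0 -imset_comp gclos_orbit.
Qed.

Section ValidRun.
Variables (Ps : nat -> rmap R) (m : nat).
Hypothesis run : valid_run TT A Ps m.

Lemma valid_run_gclos q : 0 < q <= m -> Ps q \in gclos TT.
Proof. by case: run => chosen _ /chosen; rewrite inE => /andP[]. Qed.

Lemma valid_run_cover P :
  P \in gclos TT -> exists i : 'I_m.+1, P \in Gi TT A Ps i.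
Proof.
move=> PG; case: run => _ exhausted.
have : P \in \bigcup_(i < m.+1) Gi TT A Ps i.
  by apply: contraT => PnG; rewrite -(in_set0 P) -exhausted inE PnG.
by case/bigcupP => i _; exists i.
Qed.

Lemma Ri_in_quotA psi0 (i : 'I_m.+1) : Ri TT A Ps psi0 i \in quotA R A.
Proof.
have [-> | i_neq0] := eqVneq (val i) 0; first by rewrite Ri0E imset_f.
by rewrite RiE ?imset_f // valid_run_gclos // lt0n i_neq0 -ltnS ltn_ord.
Qed.

Lemma quotA_valid_run psi0 : quotA R A = [set Ri TT A Ps psi0 i | i : 'I_m.+1].
Proof.
apply/eqP; rewrite eqEsubset; apply/andP; split; apply/subsetP => C.
  case/imsetP => x _ ->; have [_ transTT _] := genTT.
  have [P /valid_run_cover [i PGi] <-] := transTT psi0 x.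
  apply/imsetP; exists i => //; apply/esym/mem_quotA_classE.
    exact: Ri_in_quotA.
  exact: imset_f.
by case/imsetP => i _ ->; apply: Ri_in_quotA.
Qed.

End ValidRun.

Lemma card_classA x : pointwise_disjoint TT -> #|classA x| = #|OA TT A|.
Proof.
move=> disjTT; rewrite classA_orbit.
by apply: card_in_imset => P T /OA_gclos PG /OA_gclos TG; apply: disjTT.
Qed.

End Classes.

Theorem proposition1 (n : nat) (R : {set qstate n}) (TT : {set rmap R})
  (A : {set 'I_n}) (psi0 : elt R) :
  R != set0 -> generator_set TT -> A != set0 ->
  (forall (m : nat) (Ps : nat -> rmap R), valid_run TT A Ps m ->
     quotA R A = [set Ri TT A Ps psi0 (val i) | i : 'I_m.+1]) /\
  ((forall P, P \in TT -> mcomp P P = mid R) -> pointwise_disjoint TT ->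
     forall C, C \in quotA R A -> #|C| = #|OA TT A|).
Proof.
move=> _ genTT _; split=> [m Ps run | _ disjTT _ /imsetP[x _ ->]].
  exact: quotA_valid_run.
exact: card_classA.
Qed.
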